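(* Let $K$ be an $(\mathbb{F}_q,\mathbb{Z})$-field, $\mathcal{L}$ a language expanding $(D^{(2)},\{R_{n,m}\}_{n,m})$, and $\Delta$ a collection of functions order-definable in $\mathcal{L}$. Let $$C=\{(x,t)\in D\times K:\mathrm{ord}\,a_1(x)\ \square_1\ \mathrm{ord}(t-c(x))\ \square_2\ \mathrm{ord}\,a_2(x),\ t-c(x)\in\lambda Q_{n,m}\}\subseteq K^{k+1}$$ be an $(\mathcal{L},\Delta)$-cell. Suppose that for every $l\in\mathbb{N}$ the set $\{x\in K^k:\mathrm{ord}\,a_1(x)\equiv l\bmod n\}$ can be partitioned as a finite union of $(\mathcal{L},\Delta)$-precells. Then the projection $P=\{x\in K^k:\exists t\,(x,t)\in C\}$ can be partitioned into finitely many $(\mathcal{L},\Delta)$-precells.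
   Context: Let $K$ be an $(\mathbb{F}_q,\mathbb{Z})$-field: a valued field with residue field isomorphic to $\mathbb{F}_q$ and value group elementarily equivalent to $\mathbb{Z}$. Notation: $\mathrm{ord}$ is the valuation ($\mathrm{ord}\,0=+\infty$), $\mathcal{O}_K$ the valuation ring, $\mathcal{M}_K$ its maximal ideal, $\pi_K$ an element of smallest positive order; integers $\ell$ added to orders mean $\ell\cdot\mathrm{ord}\,\pi_K$. For $n>0$, $P_n$ is the set of nonzero $n$-th powers. For $m>0$, $\mathrm{ac}_m:K^\times\to(\mathcal{O}_K/\pi_K^m)^\times$ is the unique group homomorphism with $\mathrm{ac}_m(\pi_K)=1$ and $\mathrm{ac}_m(u)\equiv u\bmod \pi_K^m$ for units $u$. Put $Q_{n,m}=\{x\in P_n\cdot(1+\mathcal{M}_K^m):\mathrm{ac}_m(x)=1\}$ and $\lambda Q_{n,m}=\{\lambda t:t\in Q_{n,m}\}$ for $\lambda\in K$ (so $0\cdot Q_{n,m}=\{0\}$). Relations: $R_{n,m}(x,y,z)\Leftrightarrow y-x\in zQ_{n,m}$; $D^{(2)}(x,y)\Leftrightarrow \mathrm{ord}\,x<\mathrm{ord}\,y$. Definable means definable with parameters from $K$. A function $f:K^k\to K$ is order-definable in $\mathcal{L}$ if $\{(x,t):\mathrm{ord}\,f(x)<\mathrm{ord}\,t\}$ is $\mathcal{L}$-definable. Cells: let $\mathcal{L}$ expand $(D^{(2)},\{R_{n,m}\})$ and $\Delta=\bigcup_k\Delta_k$, $\Delta_k$ a set of functions $K^k\to K$. An $(\mathcal{L},\Delta)$-precell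 in $K^k$ is a set $\{x\in K^k:\phi(x)\}$ with $\phi$ a Boolean combination of conditions $\mathrm{ord}\,a_1(x)<\mathrm{ord}\,a_2(x)+\ell$ ($a_i\in\Delta_k$, $\ell\in\mathbb{Z}$) and $b_1(x)-b_2(x)\in\lambda Q_{n,m}$ ($b_i$ quantifier-free $\mathcal{L}$-definable functions, $\lambda\in K$). An $(\mathcal{L},\Delta)$-cell in $K^{k+1}$ is a set $\{(x,t)\in D\times K:\mathrm{ord}\,a_1(x)\ \square_1\ \mathrm{ord}(t-c(x))\ \square_2\ \mathrm{ord}\,a_2(x),\ t-c(x)\in\lambda Q_{n,m}\}$ with $D$ an $(\mathcal{L},\Delta)$-precell in $K^k$, $\lambda\in K$, $n,m>0$, $a_1,a_2\in\Delta_k$, each $\square_i$ either $<$ or ''no condition'', and center $c:K^k\to K$ quantifier-free $\mathcal{L}$-definable. *)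

From HB Require Import structures.
From mathcomp Require Import all_boot all_order all_algebra.
Set Implicit Arguments. Unset Strict Implicit. Unset Printing Implicit Defensive.
Import GRing.Theory.
Local Open Scope ring_scope.

Record signature := Signature {
  fsym : Type; far : fsym -> nat;
  rsym : Type; rar : rsym -> nat }.

Inductive term (S : signature) : Type :=
  | tvar : nat -> term S
  | tapp (f : fsym S) : ('I_(far f) -> term S) -> term S.

Inductive formula (S : signature) : Type :=
  | fbot : formula S
  | feq : term S -> term S -> formula S
  | frel (r : rsym S) : ('I_(rar r) -> term S) -> formula S
  | fnot : formula S -> formula S
  | fand : formula S -> formula S -> formula S
  | f_or : formula S -> formula S -> formula S
  | fimp : formula S -> formula S -> formula S
  | fex : nat -> formula S -> formula S
  | fall : nat -> formula S -> formula S.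

Record interp (S : signature) (M : Type) := Interp {
  funI : forall f : fsym S, ('I_(far f) -> M) -> M;
  relI : forall r : rsym S, ('I_(rar r) -> M) -> Prop }.

Section Semantics.
Variables (S : signature) (M : Type) (I : interp S M).

Fixpoint teval (e : nat -> M) (t : term S) : M :=
  match t with
  | tvar n => e n
  | tapp f args => funI I (fun i => teval e (args i))
  end.

Definition upd (e : nat -> M) (n : nat) (a : M) : nat -> M :=
  fun i => if i == n then a else e i.

Fixpoint sat (e : nat -> M) (phi : formula S) : Prop :=
  match phi with
  | fbot => False
  | feq t1 t2 => teval e t1 = teval e t2
  | frel r args => relI I (fun i => teval e (args i))
  | fnot p => ~ sat e p
  | fand p1 p2 => sat e p1 /\ sat e p2
  | f_or p1 p2 => sat e p1 \/ sat e p2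
  | fimp p1 p2 => sat e p1 -> sat e p2
  | fex n p => exists a, sat (upd e n a) p
  | fall n p => forall a, sat (upd e n a) p
  end.
End Semantics.

Fixpoint qf (S : signature) (phi : formula S) : bool :=
  match phi with
  | fnot p => qf p
  | fand p1 p2 | f_or p1 p2 | fimp p1 p2 => qf p1 && qf p2
  | fex _ _ | fall _ _ => false
  | _ => true
  end.

Inductive og_fun := OZero | OAdd | ONeg.
Definition og_far (f : og_fun) : nat :=
  match f with OZero => 0 | OAdd => 2 | ONeg => 1 end.
Definition og_sig : signature := @Signature og_fun og_far unit (fun _ => 2%N).

Definition i0 : 'I_2 := ord0.
Definition i1 : 'I_2 := ord_max.

Definition og_interp (G : zmodType) (lt : G -> G -> Prop) : interp og_sig G :=
  @Interp og_sig G
    (fun f => match f return ('I_(og_far f) -> G) -> G with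
              | OZero => fun _ => 0
              | OAdd => fun a => a i0 + a i1
              | ONeg => fun a => - a ord0
              end)
    (fun _ a => lt (a i0) (a i1)).

Definition int_lt (x y : int) : Prop := (x < y)%R.

(* (G, lt) is elementarily equivalent to (Z, <) as an ordered group:
   every formula holds universally in G iff it does in Z (hence every
   sentence has the same truth value in both). *)
Definition elem_equiv_Z (G : zmodType) (lt : G -> G -> Prop) : Prop :=
  forall phi : formula og_sig,
    (forall e, sat (og_interp lt) e phi) <-> (forall e, sat (og_interp int_lt) e phi).

Record FqZField (q : nat) := FqZ {
  vK : fieldType;
  vG : zmodType;
  vlt : vG -> vG -> Prop;
  vv : vK -> vG;                     (* valuation on K^x (value at 0 irrelevant) *)
  vpi : vK;
  vac : nat -> vK -> vK;             (* ac_m, via unit representatives *)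
  vlt_irr : forall g, ~ vlt g g;
  vlt_trans : forall g h l, vlt g h -> vlt h l -> vlt g l;
  vlt_total : forall g h, vlt g h \/ g = h \/ vlt h g;
  vlt_add : forall g h l, vlt g h -> vlt (g + l) (h + l);
  vv_mul : forall x y, x != 0 -> y != 0 -> vv (x * y) = vv x + vv y;
  vv_add : forall x y, x != 0 -> y != 0 -> x + y != 0 ->
             ~ vlt (vv (x + y)) (vv x) \/ ~ vlt (vv (x + y)) (vv y);
  vv_surj : forall g, exists x, x != 0 /\ vv x = g;
  vG_Z : elem_equiv_Z vlt;
  vpi_neq0 : vpi != 0;
  vpi_pos : vlt 0 (vv vpi);
  vpi_min : forall x, x != 0 -> vlt 0 (vv x) -> ~ vlt (vv x) (vv vpi);
  (* residue field O_K / M_K isomorphic to F_q: a surjective ring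
     morphism O_K -> F_q with kernel M_K *)
  vres : exists (F : finFieldType) (r : vK -> F),
      #|F| = q /\
      let O := fun x : vK => x = 0 \/ ~ vlt (vv x) 0 in
      let Mx := fun x : vK => x = 0 \/ vlt 0 (vv x) in
      (forall x y, O x -> O y -> r (x + y) = r x + r y) /\
      (forall x y, O x -> O y -> r (x * y) = r x * r y) /\
      r 1 = 1 /\
      (forall z, exists x, O x /\ r x = z) /\
      (forall x, O x -> (r x = 0 <-> Mx x));
  (* ac_m : K^x -> (O_K / pi^m)^x, the group morphism with ac_m(pi)=1 and
     ac_m(u) = u mod pi^m for units u; values are represented by units of
     O_K, and equality in O_K/pi^m is congruence modulo pi^m O_K. *)
  vac_unit : forall m x, (0 < m)%N -> x != 0 -> vac m x != 0 /\ vv (vac m x) = 0;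
  vac_mul : forall m x y, (0 < m)%N -> x != 0 -> y != 0 ->
      vac m (x * y) - vac m x * vac m y = 0 \/
      ~ vlt (vv (vac m (x * y) - vac m x * vac m y)) (vv vpi *+ m);
  vac_pi : forall m, (0 < m)%N ->
      vac m vpi - 1 = 0 \/ ~ vlt (vv (vac m vpi - 1)) (vv vpi *+ m);
  vac_u : forall m u, (0 < m)%N -> u != 0 -> vv u = 0 ->
      vac m u - u = 0 \/ ~ vlt (vv (vac m u - u)) (vv vpi *+ m)
}.

Section Field.
Variables (q : nat) (K : FqZField q).
Local Notation F := (vK K).
Local Notation G := (vG K).
Local Notation lt := (@vlt q K).
Local Notation v := (@vv q K).
Local Notation pi := (vpi K).

(* ord : K -> Gamma u {+oo}, with None = +oo *)
Definition ord (x : F) : option G := if x == 0 then None else Some (v x).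

(* ord o1 < ord o2 + l   (l integer, meaning l * ord pi) *)
Definition ordlt (o1 o2 : option G) (l : int) : Prop :=
  match o1, o2 with
  | Some g1, Some g2 => lt g1 (g2 + (v pi) *~ l)
  | Some _, None => True
  | None, _ => False
  end.

(* ord o = l mod n, for o in Gamma (+oo is congruent to nothing) *)
Definition ordcong (o : option G) (l n : nat) : Prop :=
  match o with
  | Some g => exists h : G, g - (v pi) *+ l = h *+ n
  | None => False
  end.

(* a = b mod pi^m O_K, i.e. ord (a - b) >= m *)
Definition congm (m : nat) (a b : F) : Prop :=
  ~ ordlt (ord (a - b)) (Some (v pi *+ m)) 0.

Definition Pn (n : nat) (x : F) : Prop := exists w, w != 0 /\ x = w ^+ n.

(* Q_{n,m} = { x in P_n (1 + M^m) : ac_m x = 1 }, with M_K^m = pi^m O_K *)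
Definition Qnm (n m : nat) (x : F) : Prop :=
  (exists y z, Pn n y /\ congm m z 1 /\ x = y * z) /\
  x != 0 /\ congm m (@vac q K m x) 1.

Definition inQ (lam : F) (n m : nat) (y : F) : Prop :=
  exists t, Qnm n m t /\ y = lam * t.

Definition Drel (x y : F) : Prop := ordlt (ord x) (ord y) 0.
Definition Rrel (n m : nat) (x y z : F) : Prop := inQ z n m (y - x).

Definition j3 (i : nat) : 'I_3 := inord i.

(* A language L expanding (D^(2), {R_{n,m}}): a signature interpreted in K
   having symbols for D and for every R_{n,m} (n, m > 0). *)
Record expansion := Expansion {
  Lsig : signature;
  LI : interp Lsig F;
  LD : exists r (H : rar r = 2%N), forall args : 'I_2 -> F,
         @relI Lsig F LI r (args \o cast_ord H) <-> Drel (args i0) (args i1);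
  LR : forall n m, (0 < n)%N -> (0 < m)%N ->
         exists r (H : rar r = 3%N), forall args : 'I_3 -> F,
         @relI Lsig F LI r (args \o cast_ord H) <->
         Rrel n m (args (j3 0)) (args (j3 1)) (args (j3 2))
}.

Variable L : expansion.

(* environment: variables 0..k-1 get x, the others are parameters e *)
Definition extend (k : nat) (x : 'I_k -> F) (e : nat -> F) : nat -> F :=
  fun i => match @insub _ (fun j => (j < k)%N) 'I_k i with
           | Some j => x j
           | None => e i
           end.

Definition definable (k : nat) (S : ('I_k -> F) -> Prop) : Prop :=
  exists (phi : formula (Lsig L)) (e : nat -> F),
    forall x, S x <-> sat (LI L) (extend x e) phi.

Definition qf_definable (k : nat) (S : ('I_k -> F) -> Prop) : Prop :=
  exists (phi : formula (Lsig L)) (e : nat -> F),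
    qf phi /\ forall x, S x <-> sat (LI L) (extend x e) phi.

Definition init (k : nat) (z : 'I_k.+1 -> F) : 'I_k -> F :=
  fun i => z (widen_ord (leqnSn k) i).

Definition qf_def_fun (k : nat) (f : ('I_k -> F) -> F) : Prop :=
  qf_definable (fun z : 'I_k.+1 -> F => z ord_max = f (init z)).

Definition order_definable (k : nat) (f : ('I_k -> F) -> F) : Prop :=
  definable (fun z : 'I_k.+1 -> F => ordlt (ord (f (init z))) (ord (z ord_max)) 0).

Variable Delta : forall k : nat, (('I_k -> F) -> F) -> Prop.

Inductive precell_cond (k : nat) : (('I_k -> F) -> Prop) -> Prop :=
  | pc_ord (a1 a2 : ('I_k -> F) -> F) (l : int) :
      Delta a1 -> Delta a2 ->
      precell_cond (fun x => ordlt (ord (a1 x)) (ord (a2 x)) l)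
  | pc_Q (b1 b2 : ('I_k -> F) -> F) (lam : F) (n m : nat) :
      qf_def_fun b1 -> qf_def_fun b2 -> (0 < n)%N -> (0 < m)%N ->
      precell_cond (fun x => inQ lam n m (b1 x - b2 x))
  | pc_not P : precell_cond P -> precell_cond (fun x => ~ P x)
  | pc_and P1 P2 : precell_cond P1 -> precell_cond P2 ->
      precell_cond (fun x => P1 x /\ P2 x)
  | pc_or P1 P2 : precell_cond P1 -> precell_cond P2 ->
      precell_cond (fun x => P1 x \/ P2 x).

Definition precell (k : nat) (S : ('I_k -> F) -> Prop) : Prop :=
  exists P, precell_cond P /\ forall x, S x <-> P x.

(* optional condition "o1 < o2" (b = true) or no condition (b = false) *)
Definition boxlt (b : bool) (o1 o2 : option G) : Prop :=
  if b then ordlt o1 o2 0 else True.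

Definition cell_set (k : nat) (D : ('I_k -> F) -> Prop) (lam : F) (n m : nat)
  (a1 a2 c : ('I_k -> F) -> F) (b1 b2 : bool) (x : 'I_k -> F) (t : F) : Prop :=
  D x /\ boxlt b1 (ord (a1 x)) (ord (t - c x)) /\
  boxlt b2 (ord (t - c x)) (ord (a2 x)) /\ inQ lam n m (t - c x).

Definition precell_partition (k : nat) (S : ('I_k -> F) -> Prop) : Prop :=
  exists (N : nat) (Ps : 'I_N -> ('I_k -> F) -> Prop),
    (forall i, precell (Ps i)) /\
    (forall x, S x <-> exists i, Ps i x) /\
    (forall i j x, i != j -> Ps i x -> Ps j x -> False).

End Field.

(* After translating t by the center c(x), the fibre of the cell over x in D
   is the set of s in lambda Q_{n,m} subject to conditions on ord s alone.
   The orders of the elements of lambda Q_{n,m} are {+oo} if lambda = 0 and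
   the coset ord lambda + n G of the value group G otherwise (elements of
   order n g in Q_{n,m} are the n-th powers of elements with angular
   component 1).  So x lies in the projection iff x is in D and that set of
   orders meets the interval given by ord a1(x) and ord a2(x).  This is
   decided in G, an ordered group with least positive element ord pi that is
   elementarily equivalent to Z: a lower bound alone means a1(x) <> 0, an
   upper bound alone is always met, and with both bounds the coset meets the
   interval iff ord a1(x) + (r_l + 1) < ord a2(x), where l is the residue of
   ord a1(x) modulo n (Euclidean division, transferred from Z) and r_l only
   depends on l.  Splitting along the residue classes of ord a1(x), which are
   partitionable by hypothesis, gives the partition. *)

From Pilot Require Import Defs.
From mathcomp Require Import all_boot all_order all_algebra ring zify.
Set Implicit Arguments. Unset Strict Implicit. Unset Printing Implicit Defensive.
Import GRing.Theory Num.Theory.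
Local Open Scope ring_scope.

Class ordered_group (G : zmodType) (lt : G -> G -> Prop) : Prop := OrderedGroup {
  og_irr : forall g, ~ lt g g;
  og_trans : forall g h l, lt g h -> lt h l -> lt g l;
  og_total : forall g h, lt g h \/ g = h \/ lt h g;
  og_add : forall g h l, lt g h -> lt (g + l) (h + l) }.

(* Basic order facts; ~ lt h g is used as "g <= h". *)
Section OrderedGroup.
Context {G : zmodType} {lt : G -> G -> Prop} {OG : ordered_group lt}.

Lemma og_asym (g h : G) : lt g h -> ~ lt h g.
Proof. by move=> gh hg; apply: og_irr (og_trans gh hg). Qed.

Lemma og_nlt (g h : G) : ~ lt g h -> lt h g \/ h = g.
Proof. by case: (og_total g h) => [//|[->|]]; [right|left]. Qed.

Lemma og_lt_le_trans (a b c : G) : lt a b -> ~ lt c b -> lt a c.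
Proof. by move=> ab /og_nlt [bc|<-] //; apply: og_trans ab bc. Qed.

Lemma og_le_lt_trans (a b c : G) : ~ lt b a -> lt b c -> lt a c.
Proof. by move=> /og_nlt [ab|->] // bc; apply: og_trans ab bc. Qed.

Lemma og_le_trans (a b c : G) : ~ lt b a -> ~ lt c b -> ~ lt c a.
Proof. by move=> ba cb ca; apply: cb; apply: og_lt_le_trans ca ba. Qed.

Lemma og_add2r (l g h : G) : lt (g + l) (h + l) <-> lt g h.
Proof. by split=> [/(og_add (- l))|/og_add //]; rewrite !addrK. Qed.

Lemma og_add2l (l g h : G) : lt (l + g) (l + h) <-> lt g h.
Proof. by rewrite ![l + _]addrC og_add2r. Qed.

Lemma og_subr (g h : G) : lt 0 (h - g) <-> lt g h.
Proof. by rewrite -(og_add2r g) add0r subrK. Qed.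

Lemma og_add2 (a b c d : G) : lt a b -> lt c d -> lt (a + c) (b + d).
Proof. by move=> ab cd; apply: (og_trans (og_add c ab)); apply/og_add2l. Qed.

Lemma og_le_add2 (a b c d : G) : ~ lt b a -> ~ lt d c -> ~ lt (b + d) (a + c).
Proof.
move=> /og_nlt [ab|->] /og_nlt [cd|->]; last exact: og_irr.
- by apply: og_asym; apply: og_add2.
- by apply: og_asym; apply/og_add2r.
- by apply: og_asym; apply/og_add2l.
Qed.

Lemma og_opp (g h : G) : lt (- h) (- g) <-> lt g h.
Proof. by rewrite -og_subr opprK addrC og_subr. Qed.

Lemma og_pmuln2 n (g h : G) : lt (g *+ n.+1) (h *+ n.+1) <-> lt g h.
Proof.
suff mono a b : lt a b -> lt (a *+ n.+1) (b *+ n.+1).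
  split=> [gh|]; last exact: mono.
  case: (og_total g h) => [//|[eq_gh|hg]]; first by rewrite eq_gh in gh; case: (og_irr gh).
  by case: (og_asym gh (mono _ _ hg)).
move=> ab; elim: n => [|n IH]; first by rewrite !mulr1n.
by rewrite !(mulrS _ n.+1); apply: og_add2.
Qed.

Lemma og_pmulnI n : injective (fun g : G => g *+ n.+1).
Proof.
move=> g h /= E; case: (og_total g h) => [|[//|]] /(og_pmuln2 n);
  by rewrite E => lt_E; case: (og_irr lt_E).
Qed.

Lemma og_le_muln n (a b : G) : ~ lt b a -> ~ lt (b *+ n) (a *+ n).
Proof. by case: n => [|n] ?; [rewrite !mulr0n; apply: og_irr|rewrite og_pmuln2]. Qed.

Lemma og_pos_muln n (g : G) : lt 0 g -> lt 0 (g *+ n.+1).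
Proof. by rewrite -(og_pmuln2 n) mul0rn. Qed.

Lemma og_nneg_muln n (g : G) : ~ lt g 0 -> ~ lt (g *+ n) 0.
Proof. by move/(og_le_muln (n:=n)); rewrite mul0rn. Qed.

Lemma og_le_muln_nat (g : G) i j : ~ lt g 0 -> (i <= j)%N -> ~ lt (g *+ j) (g *+ i).
Proof.
move=> g0 /subnKC <-; rewrite mulrnDr -{2}[g *+ i]addr0.
by apply: og_le_add2; [apply: og_irr|apply: og_nneg_muln].
Qed.

Lemma og_lt_muln_nat (g : G) i j : lt 0 g -> (i < j)%N -> lt (g *+ i) (g *+ j).
Proof.
move=> g0 /subnKC <-; rewrite addSnnS mulrnDr -{1}[g *+ i]addr0 og_add2l.
exact: og_pos_muln.
Qed.

Lemma og_lt_or_nlt (g h : G) : lt g h \/ ~ lt g h.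
Proof. by case: (og_total g h) => [|[->|/og_asym]]; [left|right; apply: og_irr|right]. Qed.

End OrderedGroup.

(* Terms and formulas of the language of ordered groups used to transfer
   Euclidean division from (Z, <) to any elementarily equivalent group. *)
Definition pair_args (a b : term og_sig) : 'I_2 -> term og_sig :=
  fun i => if val i == 0%N then a else b.
Definition tzero : term og_sig := @tapp og_sig OZero (fun _ => @tvar og_sig 0).
Definition tadd (a b : term og_sig) : term og_sig := @tapp og_sig OAdd (pair_args a b).
Definition flt (a b : term og_sig) : formula og_sig := @Defs.frel og_sig tt (pair_args a b).
Fixpoint tmuln (k : nat) (t : term og_sig) : term og_sig :=
  if k is k'.+1 then tadd t (tmuln k' t) else tzero.

(* Variables: 0 is the dividend X, 1 the candidate least positive element P,
   2 a bound variable Y and 3 the quotient H. *)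
Definition vX := @tvar og_sig 0.
Definition vP := @tvar og_sig 1.
Definition vY := @tvar og_sig 2.
Definition vH := @tvar og_sig 3.

Fixpoint remainder_disj (n N : nat) : formula og_sig :=
  if N is N'.+1 then
    f_or (remainder_disj n N') (feq vX (tadd (tmuln n vH) (tmuln N' vP)))
  else fbot og_sig.

Definition division_formula (n : nat) : formula og_sig :=
  fimp (fand (flt tzero vP) (fall 2 (fimp (flt tzero vY) (fnot (flt vY vP)))))
       (fex 3 (remainder_disj n n)).

Section DivisionFormula.
Variables (G : zmodType) (lt : G -> G -> Prop).

Lemma teval_muln e k t :
  teval (og_interp lt) e (tmuln k t) = teval (og_interp lt) e t *+ k.
Proof. by elim: k => [|k IH] //=; rewrite mulrS -IH. Qed.

Lemma sat_remainder_disj e n N : sat (og_interp lt) e (remainder_disj n N) <->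
  exists2 l, (l < N)%N & e 0%N = e 3%N *+ n + e 1%N *+ l.
Proof.
elim: N => [|N IH] /=; first by split=> // [[]].
rewrite IH /= !teval_muln; split.
- by case=> [[l lN E]|E]; [exists l => //; apply: ltnW|exists N].
- by case=> l; rewrite ltnS leq_eqVlt => /orP[/eqP->|lN] E; [right|left; exists l].
Qed.

End DivisionFormula.

(* In (Z, <) the least positive element is 1 and Euclidean division holds. *)
Lemma division_formula_Z n : (0 < n)%N ->
  forall e, sat (og_interp int_lt) e (division_formula n).
Proof.
move=> n0 e /= [e1_pos e1_min].
have e1 : e 1%N = 1.
  have := e1_min 1; rewrite /upd /= => /(_ isT).
  by move: e1_pos; rewrite /int_lt /=; lia.
exists ((e 0%N) %/ n)%Z; apply/sat_remainder_disj; rewrite /upd /= e1.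
have r_ge0 : 0 <= (e 0%N %% n)%Z by apply: modz_ge0; rewrite -lt0n.
exists `|(e 0%N %% n)%Z|%N.
- by have := @ltz_pmod (e 0%N) n; lia.
- by rewrite {1}(divz_eq (e 0%N) n) -mulrzz natz abszE ger0_norm.
Qed.

Section DiscreteGroup.
Context {G : zmodType} {lt : G -> G -> Prop} {OG : ordered_group lt}.
Variable p : G.
Hypotheses (p_pos : lt 0 p) (p_min : forall g, lt 0 g -> ~ lt g p).

Lemma discrete_step (g : G) : lt (- p) g -> ~ lt g 0.
Proof.
move=> /(iffRL (og_subr _ _)); rewrite opprK => /p_min.
by rewrite -{2}[p]add0r og_add2r.
Qed.

(* Euclidean division by n, transferred from Z by elementary equivalence. *)
Lemma residue (EZ : elem_equiv_Z lt) n g : (0 < n)%N ->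
  exists h l, (l < n)%N /\ g = h *+ n + p *+ l.
Proof.
move=> n0; have /(_ (fun i => if i is 0%N then g else if i is 1%N then p else 0)) :=
  proj2 (EZ (division_formula n)) (division_formula_Z n0).
case=> [|h /sat_remainder_disj [l ln E]]; last by exists h, l.
by split=> // a; apply: p_min.
Qed.

(* The remainder is unique: 0 < (l' - l) p < n p is never in n G. *)
Lemma residue_uniq n (g h h' : G) l l' : (l < n)%N -> (l' < n)%N ->
  g = h *+ n + p *+ l -> g = h' *+ n + p *+ l' -> l = l'.
Proof.
wlog ll' : l l' h h' / (l < l')%N.
  move=> W ln l'n E E'; case: (ltngtP l l') => [|l'l|//].
  - by move=> ll'; apply: (W l l' h h').
  - by apply/esym; apply: (W l' l h' h).
move=> ln l'n -> E; exfalso.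
have diff : (h - h') *+ n = p *+ (l' - l).
  rewrite mulrnBl mulrnBr ?(ltnW ll') //.
  have -> : h *+ n = h' *+ n + p *+ l' - p *+ l by rewrite -E addrK.
  by rewrite addrAC [h' *+ n + _]addrC addrK.
clear E; case: n ln l'n diff => // n _ l'n diff.
have d_pos : lt 0 (h - h').
  rewrite -(og_pmuln2 n) mul0rn diff.
  have [d ->] : exists d, (l' - l = d.+1)%N by exists (l' - l).-1; rewrite prednK // subn_gt0.
  exact: og_pos_muln.
apply: (p_min d_pos); rewrite -(og_pmuln2 n) diff.
by apply: og_lt_muln_nat => //; rewrite ltn_subLR ?(ltnW ll') // ltn_addl.
Qed.

Lemma coset_above n (g c0 : G) : (0 < n)%N -> exists gam, lt g (c0 + gam *+ n).
Proof.
case: n => // n _; case: (og_lt_or_nlt (g - c0) 0) => [neg|nneg].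
  by exists 0; rewrite mul0rn addr0 -og_subr -opprB -oppr0 og_opp.
pose gam := g - c0 + p; exists gam.
rewrite -(og_add2r (- c0)) addrAC subrr add0r.
have lt_gam : lt (g - c0) gam by rewrite /gam -{1}[g - c0]addr0 og_add2l.
have gam_pos : lt 0 gam by exact: og_le_lt_trans nneg lt_gam.
apply: (og_lt_le_trans lt_gam); rewrite -{2}[gam]mulr1n.
exact: og_le_muln_nat (og_asym gam_pos) (isT : (1 <= n.+1)%N).
Qed.

Lemma coset_below n (g c0 : G) : (0 < n)%N -> exists gam, lt (c0 + gam *+ n) g.
Proof.
move=> n0; have [gam lt_gam] := coset_above (- g) (- c0) n0; exists (- gam).
by rewrite -og_opp opprD mulNrn !opprK.
Qed.

(* If g1 = l p and c0 = s0 p modulo n G, the least element of c0 + n G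
   strictly above g1 is g1 + (r + 1) p with r = coset_gap n l s0. *)
Definition coset_gap (n l s0 : nat) : nat := ((s0 + n - l.+1) %% n)%N.

Lemma coset_gap_spec n l s0 : (l < n)%N -> (s0 < n)%N ->
  exists kk, (l.+1 + coset_gap n l s0 = s0 + kk * n)%N.
Proof.
rewrite /coset_gap => ln sn; case: (ltnP (s0 + n - l.+1) n) => small_r.
  by exists 1%N; rewrite modn_small //; lia.
exists 0%N; have -> : (s0 + n - l.+1 = (s0 + n - l.+1 - n) + n)%N by lia.
by rewrite modnDr modn_small; lia.
Qed.

Lemma coset_first_above n (g1 c0 h1 h0 : G) l s0 :
  (l < n)%N -> (s0 < n)%N -> g1 = h1 *+ n + p *+ l -> c0 = h0 *+ n + p *+ s0 ->
  let next := g1 + p *+ (coset_gap n l s0).+1 in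
  (exists gam0, c0 + gam0 *+ n = next) /\
  (forall gam, lt g1 (c0 + gam *+ n) -> ~ lt (c0 + gam *+ n) next).
Proof.
move=> ln sn E1 E0 next.
have [kk Ekk] := coset_gap_spec ln sn.
pose gam0 := h1 - h0 + p *+ kk.
have E : c0 + gam0 *+ n = next.
  rewrite /next E1 -[RHS]addrA -mulrnDr addnS -addSn Ekk E0 /gam0.
  rewrite mulrnDr mulrnDl mulrnBl mulrnA [h1 *+ n - _]addrC -!addrA.
  by rewrite (addrCA (p *+ s0)) addNKr addrCA.
split=> [|gam lt_g1]; first by exists gam0.
have [n' En] : exists n', n = n'.+1 by exists n.-1; rewrite prednK // (leq_ltn_trans _ ln).
rewrite -E og_add2l En og_pmuln2 -(og_add2r (- gam0)) subrr.
apply: discrete_step; rewrite -(og_pmuln2 n') -En mulrnBl -(og_add2l (c0 - c0)).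
rewrite [X in lt _ X]addrACA -opprD E subrr add0r mulNrn.
apply: (og_le_lt_trans _ (proj2 (og_add2r (- next) _ _) lt_g1)).
rewrite /next opprD addrA subrr add0r og_opp.
by apply: og_le_muln_nat (og_asym p_pos) _; rewrite ltn_mod En.
Qed.

End DiscreteGroup.

#[export] Instance value_group_ordered q (K : FqZField q) : ordered_group (@vlt q K) :=
  OrderedGroup (@vlt_irr q K) (@vlt_trans q K) (@vlt_total q K) (@vlt_add q K).

Lemma value_discrete q (K : FqZField q) (g : vG K) : vlt 0 g -> ~ vlt g (vv (vpi K)).
Proof. by have [x [x0 <-]] := vv_surj g; apply: vpi_min. Qed.

Section Valuation.
Variables (q : nat) (K : FqZField q).
Local Notation F := (vK K).
Local Notation G := (vG K).
Local Notation lt := (@vlt q K).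
Local Notation v := (@vv q K).
Local Notation p := (vv (vpi K)).

Lemma v1 : v 1 = 0.
Proof. by apply: (@addrI _ (v 1)); rewrite addr0 -vv_mul ?mulr1 ?oner_neq0. Qed.

Lemma vN1 : v (-1) = 0.
Proof.
apply: (og_pmulnI (lt := lt) (n := 1)).
rewrite /= mul0rn mulr2n -vv_mul ?oppr_eq0 ?oner_neq0 //.
by rewrite mulrNN mulr1 v1.
Qed.

Lemma vN (x : F) : x != 0 -> v (- x) = v x.
Proof. by move=> x0; rewrite -mulN1r vv_mul ?oppr_eq0 ?oner_neq0 // vN1 add0r. Qed.

Lemma vexp (x : F) n : x != 0 -> v (x ^+ n) = v x *+ n.
Proof.
move=> x0; elim: n => [|n IH]; first by rewrite expr0 mulr0n v1.
by rewrite exprS vv_mul ?expf_neq0 // IH mulrS.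
Qed.

Lemma vinv (x : F) : x != 0 -> v x^-1 = - v x.
Proof.
move=> x0; apply: (@addrI _ (v x)); rewrite subrr -vv_mul ?invr_eq0 //.
by rewrite mulfV // v1.
Qed.

Lemma v_add_dominant (x y : F) : x != 0 -> y != 0 -> lt (v x) (v y) -> v (x + y) = v x.
Proof.
move=> x0 y0 xy.
have xy0 : x + y != 0.
  apply/eqP=> sum0; have y_eq : y = - x by rewrite -[y](addKr x) sum0 addr0.
  by move: xy; rewrite y_eq vN // => /og_irr.
have ge_x : ~ lt (v (x + y)) (v x).
  by case: (vv_add x0 y0 xy0) => // nlt_y lt_x; apply/nlt_y/(og_trans lt_x xy).
have le_x : ~ lt (v x) (v (x + y)).
  have ny0 : - y != 0 by rewrite oppr_eq0.
  have sum_x : x + y + - y != 0 by rewrite addrK.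
  by case: (vv_add xy0 ny0 sum_x); rewrite addrK // vN.
by case: (og_total (v (x + y)) (v x)) => [/ge_x|[//|/le_x]].
Qed.

(* ord y >= g, i.e. y lies in the fractional ideal of elements of order >= g
   (for g = m ord pi this is M_K^m, for g = 0 the valuation ring). *)
Definition ord_ge (g : G) (y : F) : Prop := y = 0 \/ ~ lt (v y) g.

Lemma ord_geD g (a b : F) : ord_ge g a -> ord_ge g b -> ord_ge g (a + b).
Proof.
move=> [->|ga]; first by rewrite add0r. move=> [->|gb]; first by rewrite addr0; right.
have [->|a0] := eqVneq a 0; first by rewrite add0r; right.
have [->|b0] := eqVneq b 0; first by rewrite addr0; right.
have [->|ab0] := eqVneq (a + b) 0; first by left.
by right; case: (vv_add a0 b0 ab0) => le; [apply: og_le_trans ga le|apply: og_le_trans gb le].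
Qed.

Lemma ord_geM g h (a b : F) : ord_ge g a -> ord_ge h b -> ord_ge (g + h) (a * b).
Proof.
move=> [->|ga]; first by rewrite mul0r; left. move=> [->|hb]; first by rewrite mulr0; left.
have [->|a0] := eqVneq a 0; first by rewrite mul0r; left.
have [->|b0] := eqVneq b 0; first by rewrite mulr0; left.
by right; rewrite vv_mul //; apply: og_le_add2.
Qed.

Lemma ord_geN g (a : F) : ord_ge g a -> ord_ge g (- a).
Proof.
have [->|a0] := eqVneq a 0; first by rewrite oppr0; left.
by case=> [/eqP|ga]; [rewrite (negPf a0)|right; rewrite vN].
Qed.

Lemma ord_ge_unit (u : F) : v u = 0 -> ord_ge 0 u.
Proof. by move=> vu; right; rewrite vu; apply: og_irr. Qed.

Lemma congmE m (a b : F) : congm m a b <-> ord_ge (p *+ m) (a - b).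
Proof.
rewrite /congm /ordlt /ord /ord_ge mulr0z addr0.
case: eqP => [->|ab]; split; [by left|by move=> _ []|by right|].
by case=> [/ab|].
Qed.

Lemma unit_of_cong1 g (z : F) : lt 0 g -> ord_ge g (z - 1) -> z != 0 /\ v z = 0.
Proof.
move=> g_pos; have [/eqP|z1] := eqVneq (z - 1) 0.
  by rewrite subr_eq0 => /eqP -> _; rewrite oner_neq0 v1.
case=> [/eqP|le_g]; first by rewrite (negPf z1).
have lt1 : lt (v 1) (v (z - 1)) by rewrite v1; apply: og_lt_le_trans g_pos le_g.
have := v_add_dominant (oner_neq0 F) z1 lt1; rewrite addrC subrK v1 => vz.
split=> //; apply/eqP=> z0.
by move: le_g; rewrite z0 sub0r vN1 => /(_ g_pos).
Qed.

End Valuation.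

Section QOrders.
Variables (q : nat) (K : FqZField q).
Local Notation F := (vK K).
Local Notation G := (vG K).
Local Notation v := (@vv q K).
Local Notation p := (vv (vpi K)).
Local Notation ac := (@vac q K).

Lemma ac_mul_cong m (x y : F) : (0 < m)%N -> x != 0 -> y != 0 ->
  ord_ge (p *+ m) (ac m (x * y) - ac m x * ac m y).
Proof. by move=> m0 x0 y0; case: (vac_mul m0 x0 y0); [left|right]. Qed.

Lemma ac_unit_cong m (u : F) : (0 < m)%N -> u != 0 -> v u = 0 -> ord_ge (p *+ m) (ac m u - u).
Proof. by move=> m0 u0 vu; case: (vac_u m0 u0 vu); [left|right]. Qed.

(* Dividing x by (a unit representative of) ac_m x gives an element of the
   same order whose angular component is 1. *)
Lemma ac_normalize m (x : F) : (0 < m)%N -> x != 0 ->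
  exists w, [/\ w != 0, v w = v x & ord_ge (p *+ m) (ac m w - 1)].
Proof.
move=> m0 x0; set u := ac m x; have [u0 vu] := vac_unit m0 x0.
pose w := x / u; have w0 : w != 0 by rewrite mulf_neq0 ?invr_eq0.
exists w; split=> //; first by rewrite vv_mul ?invr_eq0 // vinv // -/u vu oppr0 addr0.
have [acw0 vacw] := vac_unit m0 w0.
have x_eq : x = w * u by rewrite mulfVK.
have cong_u : ord_ge (p *+ m) (u - ac m w * ac m u + ac m w * (ac m u - u)).
  apply: ord_geD; first by rewrite {1}/u x_eq; apply: ac_mul_cong.
  by rewrite mulrC -[p *+ m]addr0; apply: ord_geM (ac_unit_cong _ _ _) (ord_ge_unit vacw).
have -> : ac m w - 1 =
    - ((u - ac m w * ac m u + ac m w * (ac m u - u)) * u^-1) by field.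
apply/ord_geN; rewrite -[p *+ m]addr0; apply: ord_geM cong_u (ord_ge_unit _).
by rewrite vinv // vu oppr0.
Qed.

Lemma ac_pow_cong1 m (w : F) k : (0 < m)%N -> w != 0 ->
  ord_ge (p *+ m) (ac m w - 1) -> ord_ge (p *+ m) (ac m (w ^+ k) - 1).
Proof.
move=> m0 w0 acw; elim: k => [|k IH].
  by rewrite expr0; apply: ac_unit_cong; rewrite ?oner_neq0 ?v1.
have [acw0 vacw] := vac_unit m0 w0.
have -> : ac m (w ^+ k.+1) - 1 = (ac m (w * w ^+ k) - ac m w * ac m (w ^+ k))
    + (ac m w * (ac m (w ^+ k) - 1) + (ac m w - 1)) by rewrite exprS; ring.
apply: ord_geD; first exact: ac_mul_cong (expf_neq0 _ w0).
apply: ord_geD acw; rewrite mulrC -[p *+ m]addr0.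
exact: ord_geM IH (ord_ge_unit vacw).
Qed.

Lemma Q_exists n m (g : G) : (0 < m)%N -> exists t, Qnm (K := K) n m t /\ v t = g *+ n.
Proof.
move=> m0; have [x [x0 vx]] := vv_surj g.
have [w [w0 vw acw]] := ac_normalize m0 x0.
exists (w ^+ n); split; last by rewrite vexp // vw vx.
split; last by split; [apply: expf_neq0|apply/congmE; apply: ac_pow_cong1].
exists (w ^+ n), 1; split; first by exists w.
by split; [apply/congmE; rewrite subrr; left|rewrite mulr1].
Qed.

Lemma Q_val n m (t : F) : (0 < m)%N -> Qnm (K := K) n m t -> t != 0 /\ exists g, v t = g *+ n.
Proof.
move=> m0 [[y [z [[w [w0 ->]] [/congmE z_cong ->]]]] [t0 _]]; split=> //.
have [z0 vz] : z != 0 /\ v z = 0.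
  by apply: unit_of_cong1 z_cong; case: m m0 => // m _; apply: og_pos_muln (vpi_pos K).
by exists (v w); rewrite vv_mul ?expf_neq0 // vexp // vz addr0.
Qed.

(* For lambda = 0 the only element is s = 0, of order +oo. *)
Lemma inQ0_orders n m (R : option G -> Prop) : (0 < m)%N ->
  (exists s, inQ (K := K) 0 n m s /\ R (ord s)) <-> R None.
Proof.
move=> m0; split=> [[_ [[t [_ ->]]]]|R0]; first by rewrite mul0r /ord eqxx.
have [t [Qt _]] := Q_exists n (0 : G) m0.
by exists 0; rewrite /ord eqxx; split=> //; exists t; rewrite mul0r.
Qed.

Lemma inQ_orders lam n m (R : option G -> Prop) : (0 < m)%N -> lam != 0 ->
  (exists s, inQ (K := K) lam n m s /\ R (ord s)) <->
  exists gam, R (Some (v lam + gam *+ n)).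
Proof.
move=> m0 lam0; split.
- case=> _ [[t [Qt ->]] Rs]; have [t0 [g vt]] := Q_val m0 Qt.
  by exists g; move: Rs; rewrite /ord mulf_eq0 (negPf lam0) (negPf t0) vv_mul // vt.
- case=> g Rg; have [t [Qt vt]] := Q_exists n g m0.
  have t0 : t != 0 by case: Qt => _ [].
  exists (lam * t); split; first by exists t.
  by rewrite /ord mulf_eq0 (negPf lam0) (negPf t0) vv_mul // vt.
Qed.

End QOrders.

Section CosetConditions.
Variables (q : nat) (K : FqZField q).
Local Notation G := (vG K).
Local Notation lt := (@vlt q K).
Local Notation p := (vv (vpi K)).
Local Notation p_pos := (vpi_pos K).
Local Notation p_min := (@value_discrete q K).

Lemma ordlt0 (a b : G) : ordlt (K := K) (Some a) (Some b) 0 <-> lt a b.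
Proof. by rewrite /ordlt mulr0z addr0. Qed.

Lemma ordltN (a b : G) r : ordlt (K := K) (Some a) (Some b) (- r%:Z) <-> lt (a + p *+ r) b.
Proof. by rewrite /ordlt mulrNz -(og_add2r (p *+ r)) subrK. Qed.

(* The precell condition ord y < ord y + 1 expresses that ord y is finite. *)
Lemma ordlt_self_finite (o : option G) : ordlt o o 1 <-> ordlt (K := K) o None 0.
Proof.
by case: o => [g|//] /=; rewrite mulr1z -{1}[g]addr0 og_add2l; split=> // _; apply: p_pos.
Qed.

Lemma coset_meets_above n c0 (o : option G) : (0 < n)%N ->
  (exists gam, ordlt o (Some (c0 + gam *+ n)) 0) <-> ordlt (K := K) o None 0.
Proof.
case: o => [g|] n0; last by split=> // [[]].
split=> // _; have [gam lt_gam] := coset_above p_pos g c0 n0.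
by exists gam; rewrite ordlt0.
Qed.

Lemma coset_meets_below n c0 (o : option G) : (0 < n)%N ->
  exists gam, ordlt (K := K) (Some (c0 + gam *+ n)) o 0.
Proof.
case: o => [g|] n0; last by exists 0.
by have [gam lt_gam] := coset_below p_pos g c0 n0; exists gam; rewrite ordlt0.
Qed.

Lemma ordcong_uniq n (o : option G) l l' : (l < n)%N -> (l' < n)%N ->
  ordcong o l n -> ordcong o l' n -> l = l'.
Proof.
case: o => [g|//] ln l'n [h E] [h' E'].
by apply: (residue_uniq p_pos p_min ln l'n (h := h) (h' := h')); rewrite -?E -?E' subrK.
Qed.

(* With both bounds, the answer depends only on the residue l of A modulo n:
   the first element of the coset above A is A + (coset_gap n l s0 + 1). *)
Lemma coset_meets_between n c0 h0 s0 (A B : option G) :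
  (s0 < n)%N -> c0 = h0 *+ n + p *+ s0 ->
  (exists gam, ordlt A (Some (c0 + gam *+ n)) 0 /\
               ordlt (Some (c0 + gam *+ n)) B 0) <->
  exists l, [/\ (l < n)%N, ordcong A l n & ordlt A B (- (coset_gap n l s0).+1%:Z)].
Proof.
move=> sn E0; have n0 : (0 < n)%N by apply: leq_ltn_trans sn.
case: A => [g1|]; last by split=> [[? []]|[? []]].
have [h1 [l [ln E1]]] := residue p_pos p_min (@vG_Z q K) g1 n0.
have [[gam0 E] least] := coset_first_above p_pos p_min ln sn E1 E0.
have cong_l l' : (l' < n)%N -> ordcong (Some g1) l' n <-> l' = l.
  have cong : ordcong (Some g1) l n by exists h1; rewrite E1 addrK.
  by move=> l'n; split=> [cong'|->] //; apply: ordcong_uniq l'n ln cong' cong.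
split.
- case=> gam []; rewrite ordlt0 => lt_g1 lt_B; exists l; split=> //; first exact/(cong_l l ln).
  case: B lt_B => [b|//]; rewrite ordlt0 ordltN => lt_b.
  exact: og_le_lt_trans (least _ lt_g1) lt_b.
- case=> l' [l'n /(cong_l _ l'n) -> lt_B]; exists gam0; rewrite E ordlt0.
  split; first by rewrite -{1}[g1]addr0 og_add2l; apply: og_pos_muln p_pos.
  by case: B lt_B => [b|//]; rewrite ordlt0 -ordltN.
Qed.

End CosetConditions.

Section Partitions.
Variables (q : nat) (K : FqZField q) (L : expansion K)
  (Delta : forall k : nat, (('I_k -> vK K) -> vK K) -> Prop) (k : nat).
Local Notation T := ('I_k -> vK K).
Local Notation partitionable := (precell_partition L Delta).

Lemma partition_ext (A B : T -> Prop) :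
  partitionable A -> (forall x, A x <-> B x) -> partitionable B.
Proof.
move=> [N [Ps [cells [cover disj]]]] AB; exists N, Ps.
by split=> //; split=> // x; rewrite -AB.
Qed.

Lemma partition_empty : partitionable (fun _ : T => False).
Proof.
exists 0%N, (fun _ _ => False); split; first by case.
by split=> [x|[]//]; split=> // [[]].
Qed.

Lemma partition_precell (A : T -> Prop) : precell L Delta A -> partitionable A.
Proof.
move=> cellA; exists 1%N, (fun _ => A); split=> //; split.
  by move=> x; split=> [Ax|[]//]; exists ord0.
by move=> i j x; rewrite !ord1 eqxx.
Qed.

Lemma precell_and (A B : T -> Prop) :
  precell L Delta A -> precell L Delta B -> precell L Delta (fun x => A x /\ B x).
Proof.
move=> [PA [cA EA]] [PB [cB EB]]; exists (fun x => PA x /\ PB x).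
by split=> [|x]; [apply: pc_and|rewrite EA EB].
Qed.

Lemma precell_ord (a b : T -> vK K) (l : int) : Delta a -> Delta b ->
  precell L Delta (fun x => ordlt (ord (a x)) (ord (b x)) l).
Proof.
by move=> Ha Hb; exists (fun x => ordlt (ord (a x)) (ord (b x)) l); split=> //; apply: pc_ord.
Qed.

Lemma partition_and (A B : T -> Prop) :
  partitionable A -> precell L Delta B -> partitionable (fun x => A x /\ B x).
Proof.
move=> [N [Ps [cells [cover disj]]]] cellB.
exists N, (fun i x => Ps i x /\ B x); split; first by move=> i; apply: precell_and.
split=> [x|i j x ij [Pi _] [Pj _]]; last exact: disj ij Pi Pj.
by rewrite cover; split=> [[[i Pi] Bx]|[i [Pi Bx]]]; [exists i|split=> //; exists i].
Qed.

Lemma partition_or (A B : T -> Prop) : partitionable A -> partitionable B ->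
  (forall x, A x -> B x -> False) -> partitionable (fun x => A x \/ B x).
Proof.
move=> [N1 [P1 [cells1 [cover1 disj1]]]] [N2 [P2 [cells2 [cover2 disj2]]]] AB.
exists (N1 + N2)%N, (fun i => match split i with inl a => P1 a | inr b => P2 b end).
split; first by move=> i; case: (split i).
split=> [x|i j x].
  rewrite cover1 cover2; split.
  - by case=> [[i Pi]|[i Pi]]; [exists (unsplit (inl i))|exists (unsplit (inr i))];
      rewrite unsplitK.
  - by case=> i; case: (split i) => a Pa; [left|right]; exists a.
move=> ij; case: (splitP i) => [a Ea|a Ea]; case: (splitP j) => [b Eb|b Eb] Pa Pb.
- apply: (disj1 a b x) Pa Pb; apply: contra ij => /eqP ab.
  by apply/eqP/val_inj; rewrite /= Ea Eb ab.
- by apply: (AB x); [rewrite cover1; exists a|rewrite cover2; exists b].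
- by apply: (AB x); [rewrite cover1; exists b|rewrite cover2; exists a].
- apply: (disj2 a b x) Pa Pb; apply: contra ij => /eqP ab.
  by apply/eqP/val_inj; rewrite /= Ea Eb ab.
Qed.

Lemma partition_bigor (n : nat) (S : nat -> T -> Prop) :
  (forall l, (l < n)%N -> partitionable (S l)) ->
  (forall l l' x, (l < n)%N -> (l' < n)%N -> S l x -> S l' x -> l = l') ->
  partitionable (fun x => exists l, (l < n)%N /\ S l x).
Proof.
elim: n => [|n IH] cellsS disjS.
  by apply: partition_ext partition_empty _ => x; split=> // [[l []]].
apply: partition_ext (partition_or (IH _ _) (cellsS n _) _) _ => //.
- by move=> l ln; apply: cellsS; apply: ltnW.
- by move=> l l' x ln l'n; apply: disjS; apply: ltnW.
- move=> x [l [ln Sl]] Sn; have := disjS l n x (ltnW ln) (ltnSn n) Sl Sn.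
  by move=> eq_ln; rewrite eq_ln ltnn in ln.
move=> x; split=> [[[l [ln Sl]]|Sn]|[l [ln Sl]]].
- by exists l; split=> //; apply: ltnW.
- by exists n.
- move: ln; rewrite ltnS leq_eqVlt => /orP[/eqP eq_ln|ln]; first by right; rewrite -eq_ln.
  by left; exists l.
Qed.

End Partitions.

Arguments partition_empty {q K L Delta k}.

Section Projection.
Variables (q : nat) (K : FqZField q) (L : expansion K)
  (Delta : forall k : nat, (('I_k -> vK K) -> vK K) -> Prop) (k : nat)
  (D : ('I_k -> vK K) -> Prop) (a1 a2 : ('I_k -> vK K) -> vK K).
Hypotheses (HD : precell L Delta D) (Ha1 : Delta a1) (Ha2 : Delta a2).
Local Notation F := (vK K).
Local Notation G := (vG K).
Local Notation T := ('I_k -> F).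
Local Notation partitionable := (precell_partition L Delta).

Definition between (b1 b2 : bool) (x : T) (o : option G) : Prop :=
  boxlt b1 (ord (a1 x)) o /\ boxlt b2 o (ord (a2 x)).

Lemma cell_projection (c : T -> F) lam n m b1 b2 x :
  (exists t, cell_set D lam n m a1 a2 c b1 b2 x t) <->
  D x /\ exists s, inQ lam n m s /\ between b1 b2 x (ord s).
Proof.
split=> [[t [Dx [lt1 [lt2 Qt]]]]|[Dx [s [Qs [lt1 lt2]]]]].
  by split=> //; exists (t - c x).
by exists (s + c x); rewrite /cell_set addrK.
Qed.

Lemma precell_finite : precell L Delta (fun x => ordlt (ord (a1 x)) None 0).
Proof.
have [P [cP EP]] := precell_ord L 1 Ha1 Ha1.
by exists P; split=> // x; rewrite -EP ordlt_self_finite.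
Qed.

(* lambda = 0: the fibre is {c(x)}, so only the conditions at +oo remain. *)
Lemma partition_lam0 b1 b2 : partitionable (fun x => D x /\ between b1 b2 x None).
Proof.
case: b2.
  by apply: partition_ext partition_empty _ => x; split=> // [[_ [_ []]]].
case: b1; last first.
  by apply: partition_ext (partition_precell HD) _ => x; rewrite /between /boxlt; tauto.
apply: partition_ext (partition_precell (precell_and HD precell_finite)) _ => x.
by rewrite /between /boxlt; tauto.
Qed.

(* lambda <> 0: the orders of the fibre form the coset c0 + n G. *)
Section Coset.
Variables (n : nat) (c0 : G).
Hypothesis (n_pos : (0 < n)%N).
Local Notation in_coset b1 b2 x := (exists gam, between b1 b2 x (Some (c0 + gam *+ n))).

Lemma partition_coset_no_lower b2 : partitionable (fun x => D x /\ in_coset false b2 x).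
Proof.
apply: partition_ext (partition_precell HD) _ => x; split=> [Dx|[]//]; split=> //.
case: b2; last by exists 0.
by have [gam lt_gam] := coset_meets_below c0 (ord (a2 x)) n_pos; exists gam.
Qed.

Lemma partition_coset_lower : partitionable (fun x => D x /\ in_coset true false x).
Proof.
apply: partition_ext (partition_precell (precell_and HD precell_finite)) _ => x.
rewrite -(coset_meets_above c0 _ n_pos) /between /boxlt.
by split=> [[Dx [gam lt_gam]]|[Dx [gam [lt_gam _]]]]; split=> //; exists gam.
Qed.

(* With both bounds, split according to the residue l of ord a1(x) modulo n;
   each piece is the precell D x /\ ord a1(x) < ord a2(x) - (r_l + 1). *)
Lemma partition_coset_between
    (Hcong : forall l, partitionable (fun x => ordcong (ord (a1 x)) l n)) :
  partitionable (fun x => D x /\ in_coset true true x).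
Proof.
have [h0 [s0 [sn E0]]] :=
  residue (vpi_pos K) (@value_discrete q K) (@vG_Z q K) c0 n_pos.
pose piece l x := ordcong (ord (a1 x)) l n /\
  (D x /\ ordlt (ord (a1 x)) (ord (a2 x)) (- (coset_gap n l s0).+1%:Z)).
apply: partition_ext (partition_bigor (n := n) (S := piece) _ _) _.
- by move=> l _; apply: partition_and (Hcong l) (precell_and HD (precell_ord L _ Ha1 Ha2)).
- by move=> l l' x ln l'n [cong _] [cong' _]; apply: ordcong_uniq ln l'n cong cong'.
move=> x; rewrite /piece /between /boxlt (coset_meets_between _ _ sn E0).
split=> [[l [ln [cong [Dx lt]]]]|[Dx [l [ln cong lt]]]]; first by split=> //; exists l.
by exists l.
Qed.

Lemma partition_coset b1 b2
    (Hcong : forall l, partitionable (fun x => ordcong (ord (a1 x)) l n)) :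
  partitionable (fun x => D x /\ in_coset b1 b2 x).
Proof.
case: b1; last exact: partition_coset_no_lower.
by case: b2; [apply: partition_coset_between|apply: partition_coset_lower].
Qed.

End Coset.
End Projection.

Theorem lemma2p2 (q : nat) (K : FqZField q) (L : expansion K)
  (Delta : forall k : nat, (('I_k -> vK K) -> vK K) -> Prop)
  (HDelta : forall k (a : ('I_k -> vK K) -> vK K), Delta k a -> order_definable L a)
  (k : nat) (D : ('I_k -> vK K) -> Prop) (lam : vK K) (n m : nat)
  (a1 a2 c : ('I_k -> vK K) -> vK K) (b1 b2 : bool)
  (HD : precell L Delta D) (Hn : (0 < n)%N) (Hm : (0 < m)%N)
  (Ha1 : Delta k a1) (Ha2 : Delta k a2) (Hc : qf_def_fun L c)
  (Hcong : forall l : nat,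
      precell_partition L Delta (fun x => ordcong (ord (a1 x)) l n)) :
  precell_partition L Delta
    (fun x => exists t, cell_set D lam n m a1 a2 c b1 b2 x t).
Proof.
have [->|lam0] := eqVneq lam 0.
  apply: partition_ext (partition_lam0 a2 HD Ha1 b1 b2) _ => x.
  by rewrite cell_projection (inQ0_orders _ _ Hm).
apply: partition_ext (partition_coset HD Ha1 Ha2 (vv lam) Hn b1 b2 Hcong) _ => x.
by rewrite cell_projection (inQ_orders _ _ Hm lam0).
Qed.
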